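(* If two circuits $c,d:a\to b$ are both safe and are equal modulo $E$, then they are equal modulo $A$.
   Context: A circuit is a morphism of the free symmetric strict monoidal category whose objects are natural numbers (tensor = addition) generated by $\mathsf{discard}:1\to 0$, $\mathsf{copy}:1\to 2$, $\mathsf{zero}:0\to1$, $\mathsf{add}:2\to1$, $\mathsf{one}:0\to 1$, $\mathsf{and}:2\to 1$, considered up to the laws of symmetric monoidal categories. Composition is diagrammatic ($f;g$ = first $f$ then $g$), $\sigma$ is the symmetry $2\to2$, $\mathsf{copy}_n$, $\mathsf{discard}_n$ are the evident composites. $A$ is the set of equations: $\mathsf{copy};\sigma=\mathsf{copy}$; $\mathsf{copy};(\mathsf{copy}\otimes \mathrm{id}_1)=\mathsf{copy};(\mathrm{id}_1\otimes\mathsf{copy})$; $\mathsf{copy};(\mathsf{discard}\otimes\mathrm{id}_1)=\mathrm{id}_1$; for every circuit $f:a\to b$, $f;\mathsf{copy}_b=\mathsf{copy}_a;(f\otimes f)$ and $f;\mathsf{discard}_b=\mathsf{discard}_a$; commutativity, associativity and unit laws for $(\mathsf{add},\mathsf{zero})$ and for $(\mathsf{and},\mathsf{one})$; $\mathsf{copy};\mathsf{add}=\mathsf{discard};\mathsf{zero}$; and distributivity $(\mathrm{id}_1\otimes\mathsf{add});\mathsf{and}=(\mathsf{copy}\otimes\mathrm{id}_2);(\mathrm{id}_1\otimes\sigma\otimes\mathrm{id}_1);(\mathsf{and}\otimes\mathsf{and});\mathsf{add}$. $E$ is $A$ together with the idempotence equation $\mathsf{copy};\mathsf{and}=\mathrm{id}_1$.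 ''Equal modulo $A$'' (resp. $E$) means related by the smallest congruence (w.r.t. composition and tensor) containing $A$ (resp. $E$). View a circuit as a directed graph whose nodes are wires and whose edges go from each input wire of a generator occurrence to each of its output wires. A circuit $c$ is safe if for every occurrence of $\mathsf{and}$ in $c$, there is no input port of $c$ from which both input ports of that $\mathsf{and}$ are reachable by a forward path. *)

From mathcomp Require Import all_boot.
From Stdlib Require Import Relations.Relation_Operators.

Set Implicit Arguments.
Unset Strict Implicit.
Unset Printing Implicit Defensive.

Inductive gen := Gdiscard | Gcopy | Gzero | Gadd | Gone | Gand.

Definition gdom (g : gen) : nat :=
  match g with Gdiscard => 1 | Gcopy => 1 | Gzero => 0 | Gadd => 2 | Gone => 0 | Gand => 2 end.
Definition gcod (g : gen) : nat :=
  match g with Gdiscard => 0 | Gcopy => 2 | Gzero => 1 | Gadd => 1 | Gone => 1 | Gand => 1 end.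

(** * Raw circuit terms (syntax of the free symmetric strict monoidal category).
    [TSym a b : a+b -> b+a] is the general symmetry; [TComp f g] is f;g. *)
Inductive term :=
| TGen (g : gen)
| TId (n : nat)
| TSym (a b : nat)
| TComp (f g : term)
| TTens (f g : term).

Fixpoint ty (t : term) : option (nat * nat) :=
  match t with
  | TGen g => Some (gdom g, gcod g)
  | TId n => Some (n, n)
  | TSym a b => Some (a + b, b + a)
  | TComp f g =>
      match ty f, ty g with
      | Some (a, b), Some (b', c) => if b == b' then Some (a, c) else None
      | _, _ => None
      end
  | TTens f g =>
      match ty f, ty g with
      | Some (a, b), Some (c, d) => Some (a + c, b + d)
      | _, _ => None
      end
  end.

Definition discard := TGen Gdiscard.
Definition copy := TGen Gcopy.
Definition zero := TGen Gzero.
Definition add := TGen Gadd.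
Definition one := TGen Gone.
Definition and_ := TGen Gand.
Definition sigma := TSym 1 1.

Fixpoint copy_n (n : nat) : term :=
  match n with
  | 0 => TId 0
  | n'.+1 => TComp (TTens copy (copy_n n'))
                   (TTens (TTens (TId 1) (TSym 1 n')) (TId n'))
  end.

Fixpoint discard_n (n : nat) : term :=
  match n with
  | 0 => TId 0
  | n'.+1 => TTens discard (discard_n n')
  end.

Inductive smc : term -> term -> Prop :=
| smc_compA f g h a b c d :
    ty f = Some (a, b) -> ty g = Some (b, c) -> ty h = Some (c, d) ->
    smc (TComp (TComp f g) h) (TComp f (TComp g h))
| smc_idl f a b : ty f = Some (a, b) -> smc (TComp (TId a) f) f
| smc_idr f a b : ty f = Some (a, b) -> smc (TComp f (TId b)) f
| smc_tensA f g h a b c d e k :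
    ty f = Some (a, b) -> ty g = Some (c, d) -> ty h = Some (e, k) ->
    smc (TTens (TTens f g) h) (TTens f (TTens g h))
| smc_unitl f a b : ty f = Some (a, b) -> smc (TTens (TId 0) f) f
| smc_unitr f a b : ty f = Some (a, b) -> smc (TTens f (TId 0)) f
| smc_idtens m n : smc (TTens (TId m) (TId n)) (TId (m + n))
| smc_interchange f g h k a b c a' b' c' :
    ty f = Some (a, b) -> ty g = Some (b, c) ->
    ty h = Some (a', b') -> ty k = Some (b', c') ->
    smc (TComp (TTens f h) (TTens g k)) (TTens (TComp f g) (TComp h k))
| smc_symsym a b : smc (TComp (TSym a b) (TSym b a)) (TId (a + b))
| smc_hex1 a b c :
    smc (TSym a (b + c)) (TComp (TTens (TSym a b) (TId c)) (TTens (TId b) (TSym a c)))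
| smc_hex2 a b c :
    smc (TSym (a + b) c) (TComp (TTens (TId a) (TSym b c)) (TTens (TSym a c) (TId b)))
| smc_symnat f g a b c d :
    ty f = Some (a, c) -> ty g = Some (b, d) ->
    smc (TComp (TTens f g) (TSym c d)) (TComp (TSym a b) (TTens g f)).

Inductive axA : term -> term -> Prop :=
| A_copy_comm : axA (TComp copy sigma) copy
| A_copy_assoc : axA (TComp copy (TTens copy (TId 1))) (TComp copy (TTens (TId 1) copy))
| A_copy_unit : axA (TComp copy (TTens discard (TId 1))) (TId 1)
| A_copy_nat f a b : ty f = Some (a, b) ->
    axA (TComp f (copy_n b)) (TComp (copy_n a) (TTens f f))
| A_discard_nat f a b : ty f = Some (a, b) ->
    axA (TComp f (discard_n b)) (discard_n a)
| A_add_comm : axA (TComp sigma add) add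
| A_add_assoc : axA (TComp (TTens add (TId 1)) add) (TComp (TTens (TId 1) add) add)
| A_add_unitl : axA (TComp (TTens zero (TId 1)) add) (TId 1)
| A_add_unitr : axA (TComp (TTens (TId 1) zero) add) (TId 1)
| A_and_comm : axA (TComp sigma and_) and_
| A_and_assoc : axA (TComp (TTens and_ (TId 1)) and_) (TComp (TTens (TId 1) and_) and_)
| A_and_unitl : axA (TComp (TTens one (TId 1)) and_) (TId 1)
| A_and_unitr : axA (TComp (TTens (TId 1) one) and_) (TId 1)
| A_copy_add : axA (TComp copy add) (TComp discard zero)
| A_distr : axA (TComp (TTens (TId 1) add) and_)
    (TComp (TTens copy (TId 2))
      (TComp (TTens (TTens (TId 1) sigma) (TId 1))
        (TComp (TTens and_ and_) add))).

Inductive axE : term -> term -> Prop :=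
| E_A s t : axA s t -> axE s t
| E_idem : axE (TComp copy and_) (TId 1).

Inductive cong (R : term -> term -> Prop) : term -> term -> Prop :=
| cong_ax s t : R s t -> cong R s t
| cong_refl t : cong R t t
| cong_sym s t : cong R s t -> cong R t s
| cong_trans s t u : cong R s t -> cong R t u -> cong R s u
| cong_comp f f' g g' : cong R f f' -> cong R g g' -> cong R (TComp f g) (TComp f' g')
| cong_tens f f' g g' : cong R f f' -> cong R g g' -> cong R (TTens f g) (TTens f' g').

(** Circuits are considered up to the SMC laws, so "equal modulo A/E" is the
    congruence generated by the SMC laws together with A (resp. E). *)
Definition eq_modA : term -> term -> Prop := cong (fun s t => smc s t \/ axA s t).
Definition eq_modE : term -> term -> Prop := cong (fun s t => smc s t \/ axE s t).

(** Nodes are wires (natural numbers < nw); [gins]/[gouts] list the input and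
    output port wires; [gedges] contains an edge from each input wire of a
    generator occurrence to each of its output wires; [gands] lists, for each
    occurrence of [and], the pair of its two input wires. *)
Record graph := Graph {
  nw : nat; gins : seq nat; gouts : seq nat;
  gedges : seq (nat * nat); gands : seq (nat * nat) }.

Definition shiftp (k : nat) (e : nat * nat) := (k + e.1, k + e.2).

Fixpoint wgraph (t : term) : graph :=
  match t with
  | TGen g =>
      Graph (gdom g + gcod g) (iota 0 (gdom g)) (iota (gdom g) (gcod g))
            [seq (i, o) | i <- iota 0 (gdom g), o <- iota (gdom g) (gcod g)]
            (if g is Gand then [:: (0, 1)] else [::])
  | TId n => Graph n (iota 0 n) (iota 0 n) [::] [::]
  | TSym a b => Graph (a + b) (iota 0 (a + b)) (iota a b ++ iota 0 a) [::] [::]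
  | TTens f g =>
      let G := wgraph f in let H := wgraph g in
      Graph (nw G + nw H)
            (gins G ++ map (addn (nw G)) (gins H))
            (gouts G ++ map (addn (nw G)) (gouts H))
            (gedges G ++ map (shiftp (nw G)) (gedges H))
            (gands G ++ map (shiftp (nw G)) (gands H))
  | TComp f g =>
      let G := wgraph f in let H := wgraph g in
      (* input wires of g are identified with the output wires of f *)
      let r w := if w \in gins H then nth 0 (gouts G) (index w (gins H))
                 else nw G + w in
      let rp (e : nat * nat) := (r e.1, r e.2) in
      Graph (nw G + nw H) (gins G) (map r (gouts H))
            (gedges G ++ map rp (gedges H))
            (gands G ++ map rp (gands H))
  end.

Definition reach (G : graph) : nat -> nat -> Prop :=
  clos_refl_trans nat (fun x y => (x, y) \in gedges G).

Definition safe (t : term) : Prop :=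
  let G := wgraph t in
  forall p q i, (p, q) \in gands G -> i \in gins G ->
    ~ (reach G i p /\ reach G i q).

From Pilot Require Import Defs.
From mathcomp Require Import all_boot zify.
From Stdlib Require Import Setoid Morphisms Relations.Relation_Operators Ring.
From Stdlib Require Import FunctionalExtensionality.

(* Read a circuit as the tuple of polynomials its outputs compute in its input
   variables.  Modulo A, a circuit is determined by its projections, each
   projection is A-equal to the canonical circuit of its polynomial, and A acts
   on polynomials as the laws of a commutative semiring with x + x = 0 but
   without x * x = x.  E is sound for the Boolean reading of polynomials, so
   E-equal circuits compute the same Boolean functions.  A variable shared by
   both factors of a product would come from an input reaching both inputs of
   an and gate, so in a safe circuit every product has variable-disjoint
   factors; for such polynomials the multilinear normal form of their Boolean
   function is reached without idempotence.  Hence both circuits are A-equal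
   to the same normal forms. *)

Set Implicit Arguments.
Unset Strict Implicit.
Unset Printing Implicit Defensive.

Notation "s =A t" := (eq_modA s t) (at level 70).

#[global] Instance eqA_equiv : Equivalence eq_modA.
Proof. split; [exact: cong_refl | exact: cong_sym | exact: cong_trans]. Qed.
#[global] Instance TComp_eqA : Proper (eq_modA ==> eq_modA ==> eq_modA) TComp.
Proof. by move=> ? ? ? ? ? ?; apply: cong_comp. Qed.
#[global] Instance TTens_eqA : Proper (eq_modA ==> eq_modA ==> eq_modA) TTens.
Proof. by move=> ? ? ? ? ? ?; apply: cong_tens. Qed.

Lemma eqA_smc s t : smc s t -> s =A t. Proof. by move=> h; apply: cong_ax; left. Qed.
Lemma eqA_ax s t : axA s t -> s =A t. Proof. by move=> h; apply: cong_ax; right. Qed.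

Lemma ty_discard_n n : ty (discard_n n) = Some (n, 0).
Proof. by elim: n => //= n ->. Qed.

Lemma ty_copy_n n : ty (copy_n n) = Some (n, n + n).
Proof.
by elim: n => //= n ->; rewrite (_ : _ == _ = true); [congr (Some (_, _)) | apply/eqP]; lia.
Qed.

#[global] Hint Rewrite ty_discard_n ty_copy_n : ty.

(* Solves a typing side condition [ty t = Some (?a, ?b)], instantiating the
   evars left over by a setoid rewrite with one of the typed laws below. *)
Ltac typecheck :=
  match goal with |- ty _ = _ =>
    solve [ repeat progress (simpl; autorewrite with ty;
              repeat match goal with H : ty ?f = Some _ |- context [ty ?f] => rewrite H end);
            repeat match goal with |- context [?x == ?y] =>
              rewrite (_ : x == y = true); last by apply/eqP; lia end;
            first [reflexivity | congr (Some (_, _)); lia] ]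
  end.
Ltac typed := try typecheck.

Lemma compA f g h a b c d : ty f = Some (a, b) -> ty g = Some (b, c) -> ty h = Some (c, d) ->
  TComp (TComp f g) h =A TComp f (TComp g h).
Proof. by move=> *; apply/eqA_smc/smc_compA; eassumption. Qed.

Lemma comp_idl f a b : ty f = Some (a, b) -> TComp (TId a) f =A f.
Proof. by move=> *; apply/eqA_smc/smc_idl; eassumption. Qed.

Lemma comp_idr f a b : ty f = Some (a, b) -> TComp f (TId b) =A f.
Proof. by move=> *; apply/eqA_smc/smc_idr; eassumption. Qed.

Lemma tensA f g h a b c d e k : ty f = Some (a, b) -> ty g = Some (c, d) -> ty h = Some (e, k) ->
  TTens (TTens f g) h =A TTens f (TTens g h).
Proof. by move=> *; apply/eqA_smc/smc_tensA; eassumption. Qed.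

Lemma tens_unitl f a b : ty f = Some (a, b) -> TTens (TId 0) f =A f.
Proof. by move=> *; apply/eqA_smc/smc_unitl; eassumption. Qed.

Lemma tens_unitr f a b : ty f = Some (a, b) -> TTens f (TId 0) =A f.
Proof. by move=> *; apply/eqA_smc/smc_unitr; eassumption. Qed.

Lemma tens_id m n : TTens (TId m) (TId n) =A TId (m + n).
Proof. exact/eqA_smc/smc_idtens. Qed.

Lemma interchange f g h k a b c a' b' c' :
  ty f = Some (a, b) -> ty g = Some (b, c) -> ty h = Some (a', b') -> ty k = Some (b', c') ->
  TComp (TTens f h) (TTens g k) =A TTens (TComp f g) (TComp h k).
Proof. by move=> *; apply/eqA_smc/smc_interchange; eassumption. Qed.

Lemma sym_nat f g a b c d : ty f = Some (a, c) -> ty g = Some (b, d) ->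
  TComp (TTens f g) (TSym c d) =A TComp (TSym a b) (TTens g f).
Proof. by move=> *; apply/eqA_smc/smc_symnat. Qed.

Lemma discard_nat f a : ty f = Some (a, 0) -> f =A discard_n a.
Proof. by move=> tf; rewrite -(comp_idr tf); exact: eqA_ax (A_discard_nat tf). Qed.

Lemma copy_nat f a b : ty f = Some (a, b) ->
  TComp f (copy_n b) =A TComp (copy_n a) (TTens f f).
Proof. by move=> tf; apply/eqA_ax/A_copy_nat. Qed.

Lemma idempotent_split_id s u n : ty s = Some (n, n) -> ty u = Some (n, n) ->
  TComp s s =A s -> TComp s u =A TId n -> s =A TId n.
Proof.
move=> ts tu ss su; rewrite -su -{2}ss (compA ts ts tu) su (comp_idr ts); reflexivity.
Qed.

Lemma sym0l m : TSym 0 m =A TId m.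
Proof.
apply: (@idempotent_split_id _ (TSym m 0)); typed; last exact/eqA_smc/smc_symsym.
rewrite -{1}(tens_unitl (f := TSym 0 m) (a := m) (b := m)); typed.
rewrite -{2}(tens_unitr (f := TSym 0 m) (a := m) (b := m)); typed.
symmetry; exact: eqA_smc (smc_hex2 0 0 m).
Qed.

Lemma sym0r m : TSym m 0 =A TId m.
Proof.
apply: (@idempotent_split_id _ (TSym 0 m)); typed; last first.
  by have := eqA_smc (smc_symsym m 0); rewrite addn0.
rewrite -{1}(tens_unitr (f := TSym m 0) (a := m) (b := m)); typed.
rewrite -{2}(tens_unitl (f := TSym m 0) (a := m) (b := m)); typed.
symmetry; exact: eqA_smc (smc_hex1 m 0 0).
Qed.

Lemma copy_discardr : TComp copy (TTens (TId 1) discard) =A TId 1.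
Proof.
rewrite -{1}(eqA_ax A_copy_comm) compA; typed.
rewrite -(sym_nat (f := discard) (g := TId 1)); typed.
rewrite sym0l comp_idr; typed; exact: eqA_ax A_copy_unit.
Qed.

Definition fork n f g := TComp (copy_n n) (TTens f g).

#[global] Instance fork_eqA n : Proper (eq_modA ==> eq_modA ==> eq_modA) (fork n).
Proof. by move=> ? ? eq_f ? ? eq_g; rewrite /fork eq_f eq_g; reflexivity. Qed.

Lemma copy_n_counitl n : fork n (discard_n n) (TId n) =A TId n.
Proof.
rewrite /fork; elim: n => [|n IH] /=; first by rewrite tens_id comp_idl; typed; reflexivity.
rewrite -[in TId n.+1](tens_id 1 n) -tensA; typed.
rewrite (tensA (f := discard)); typed.
rewrite compA; typed. rewrite interchange; typed.
rewrite (interchange (f := TId 1)); typed.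
rewrite -(sym_nat (f := TId 1)); typed.
rewrite sym0r !comp_idr; typed. rewrite !comp_idl; typed.
rewrite -(tensA (f := discard)); typed. rewrite tensA; typed.
rewrite interchange; typed.
rewrite (eqA_ax A_copy_unit) IH tens_id; reflexivity.
Qed.

Lemma copy_n_counitr n : fork n (TId n) (discard_n n) =A TId n.
Proof.
rewrite /fork; elim: n => [|n IH] /=; first by rewrite tens_id comp_idl; typed; reflexivity.
rewrite -[in TId n.+1](tens_id 1 n) (tensA (f := TId 1) (g := TId n)); typed.
rewrite -(tensA (f := TId n)); typed. rewrite -(tensA (f := TId 1)); typed.
rewrite compA; typed. rewrite interchange; typed.
rewrite (interchange (f := TId 1)); typed.
rewrite -(sym_nat (f := discard)); typed.
rewrite sym0l !comp_idr; typed. rewrite !comp_idl; typed.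
rewrite -(tensA (f := TId 1)); typed. rewrite tensA; typed.
rewrite interchange; typed.
rewrite copy_discardr IH tens_id; reflexivity.
Qed.

Lemma fork_discardl f n k : ty f = Some (n, k) -> fork n (discard_n n) f =A f.
Proof.
rewrite /fork => tf.
rewrite -[discard_n n](comp_idr (ty_discard_n n)) -[f in TTens _ f](comp_idl tf).
rewrite -interchange; typed. rewrite -compA; typed.
rewrite -/(fork n (discard_n n) (TId n)) copy_n_counitl comp_idl; typed.
rewrite tens_unitl; typed; reflexivity.
Qed.

Lemma fork_discardr f n k : ty f = Some (n, k) -> fork n f (discard_n n) =A f.
Proof.
rewrite /fork => tf.
rewrite -[discard_n n](comp_idr (ty_discard_n n)) -[f in TTens f _](comp_idl tf).
rewrite -interchange; typed. rewrite -compA; typed.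
rewrite -/(fork n (TId n) (discard_n n)) copy_n_counitr comp_idl; typed.
rewrite tens_unitr; typed; reflexivity.
Qed.

Lemma comp_fork f X Y n m p q :
  ty f = Some (n, m) -> ty X = Some (m, p) -> ty Y = Some (m, q) ->
  TComp f (fork m X Y) =A fork n (TComp f X) (TComp f Y).
Proof.
move=> tf tX tY; rewrite /fork -compA; typed.
rewrite copy_nat; typed. rewrite compA; typed. rewrite interchange; typed; reflexivity.
Qed.

Lemma fork_head_tail m :
  fork m.+1 (TTens (TId 1) (discard_n m)) (TTens discard (TId m)) =A TId m.+1.
Proof.
rewrite /fork /= (tensA (f := TId 1) (g := discard_n m)); typed.
rewrite -(tensA (f := discard_n m)); typed.
rewrite -(tensA (f := TId 1)); typed.
rewrite compA; typed. rewrite interchange; typed. rewrite (interchange (f := TId 1)); typed.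
rewrite (@discard_nat (TComp (TSym 1 m) (TTens (discard_n m) discard)) (1 + m)); typed.
rewrite /= !comp_idl; typed.
rewrite -(tensA (f := TId 1)); typed. rewrite tensA; typed. rewrite interchange; typed.
rewrite -/(fork m (discard_n m) (TId m)) copy_discardr copy_n_counitl tens_id; reflexivity.
Qed.

Definition proj m j := TTens (TTens (discard_n j) (TId 1)) (discard_n (m - j.+1)).

Lemma ty_proj m j : j < m -> ty (proj m j) = Some (m, 1).
Proof. by move=> jm; rewrite /= !ty_discard_n; congr (Some (_, _)); lia. Qed.

Lemma proj_succ m j : j < m -> TComp (TTens discard (TId m)) (proj m j) =A proj m.+1 j.+1.
Proof.
move=> jm; rewrite -(tens_unitl (ty_proj jm)) interchange; typed.
rewrite comp_idr; typed. rewrite comp_idl; typed.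
rewrite /proj subSS /= -(tensA (f := discard) (g := TTens _ _)); typed.
rewrite -(tensA (f := discard)); typed; reflexivity.
Qed.

Lemma eqA_fork_head_tail c n m : ty c = Some (n, m.+1) ->
  c =A fork n (TComp c (TTens (TId 1) (discard_n m))) (TComp c (TTens discard (TId m))).
Proof.
move=> tc; rewrite -{1}(comp_idr tc) -fork_head_tail /fork -compA; typed.
rewrite (copy_nat tc) compA; typed. rewrite interchange; typed; reflexivity.
Qed.

Lemma eqA_proj m n c d : ty c = Some (n, m) -> ty d = Some (n, m) ->
  (forall j, j < m -> TComp c (proj m j) =A TComp d (proj m j)) -> c =A d.
Proof.
elim: m c d => [|m IH] c d tc td eq_proj.
  by rewrite (discard_nat tc) (discard_nat td); reflexivity.
rewrite (eqA_fork_head_tail tc) (eqA_fork_head_tail td).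
have proj0 : proj m.+1 0 =A TTens (TId 1) (discard_n m).
  by rewrite /proj subSS subn0 /= tens_id; reflexivity.
have := eq_proj 0 isT; rewrite proj0 => ->.
suff -> : TComp c (TTens discard (TId m)) =A TComp d (TTens discard (TId m)) by reflexivity.
apply: IH; typed => j jm.
rewrite compA; typed. rewrite compA; typed.
by rewrite proj_succ //; apply: eq_proj.
Qed.

Lemma proj_tensl m1 m2 j : j < m1 -> proj (m1 + m2) j =A TTens (proj m1 j) (discard_n m2).
Proof.
move=> j_m1; rewrite /proj (tensA (h := discard_n m2)); typed.
rewrite (@discard_nat (TTens (discard_n (m1 - j.+1)) (discard_n m2)) (m1 - j.+1 + m2)); typed.
by rewrite (_ : m1 - j.+1 + m2 = m1 + m2 - j.+1); [reflexivity | lia].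
Qed.

Lemma proj_tensr m1 m2 j : j < m2 -> proj (m1 + m2) (m1 + j) =A TTens (discard_n m1) (proj m2 j).
Proof.
move=> j_m2; rewrite /proj -(tensA (f := discard_n m1)); typed.
rewrite -(tensA (f := discard_n m1)); typed.
rewrite (@discard_nat (TTens (discard_n m1) (discard_n j)) (m1 + j)); typed.
by rewrite (_ : m2 - j.+1 = m1 + m2 - (m1 + j).+1); [reflexivity | lia].
Qed.

Lemma proj10 : proj 1 0 =A TId 1.
Proof. by rewrite /proj /= !tens_id; reflexivity. Qed.

Lemma fork_proj2 : fork 2 (proj 2 0) (proj 2 1) =A TId 2.
Proof.
have t0 : ty (proj 2 0) = Some (2, 1) by apply: ty_proj.
have t1 : ty (proj 2 1) = Some (2, 1) by apply: ty_proj.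
apply: (@eqA_proj 2 2); typed => -[|[|j]] // _.
- rewrite comp_idl; typed. rewrite {2}(@proj_tensl 1 1 0) // /fork compA; typed.
  rewrite interchange; typed. rewrite proj10 comp_idr; typed.
  rewrite (@discard_nat (TComp (proj 2 1) (discard_n 1)) 2); typed.
  rewrite -/(fork 2 (proj 2 0) (discard_n 2)) fork_discardr; typed; reflexivity.
- rewrite comp_idl; typed. rewrite {2}(@proj_tensr 1 1 0) // /fork compA; typed.
  rewrite interchange; typed. rewrite proj10 comp_idr; typed.
  rewrite (@discard_nat (TComp (proj 2 0) (discard_n 1)) 2); typed.
  rewrite -/(fork 2 (discard_n 2) (proj 2 1)) fork_discardl; typed; reflexivity.
Qed.

(** * Polynomials computed by circuits *)

Inductive expr := Var of nat | Zero | One | Add of expr & expr | Mul of expr & expr.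

Fixpoint esubst (s : nat -> expr) e :=
  match e with
  | Var i => s i
  | Zero => Zero
  | One => One
  | Add x y => Add (esubst s x) (esubst s y)
  | Mul x y => Mul (esubst s x) (esubst s y)
  end.

Definition subst (es : seq expr) := esubst (nth Zero es).
Definition shift k := esubst (fun i => Var (k + i)).

Fixpoint occurs i e : bool :=
  match e with
  | Var j => i == j
  | Zero | One => false
  | Add x y | Mul x y => occurs i x || occurs i y
  end.

Lemma esubst_ext s s' e : (forall i, occurs i e -> s i = s' i) -> esubst s e = esubst s' e.
Proof.
elim: e => //= [i|x IHx y IHy|x IHx y IHy] eq_s; first by apply: eq_s; rewrite eqxx.
all: by rewrite IHx ?IHy // => i occ_i; apply: eq_s; rewrite occ_i ?orbT.
Qed.

Lemma esubst_Var e : esubst Var e = e.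
Proof. by elim: e => //= x -> y ->. Qed.

Lemma esubst_comp s s' e : esubst s (esubst s' e) = esubst (fun i => esubst s (s' i)) e.
Proof. by elim: e => //= x -> y ->. Qed.

Lemma occurs_esubst i s e : occurs i (esubst s e) -> exists2 k, occurs k e & occurs i (s k).
Proof.
elim: e => //= [k|x IHx y IHy|x IHx y IHy]; first by exists k; rewrite ?eqxx.
all: by case/orP => [/IHx|/IHy] [k occ_k occ_i]; exists k; rewrite ?occ_k ?orbT.
Qed.

Lemma occurs_shift i k e : occurs i (shift k e) -> exists2 i', i = k + i' & occurs i' e.
Proof. by case/occurs_esubst => i' occ_i' /eqP ->; exists i'. Qed.

Lemma nth_map_Zero (h : expr -> expr) es j : h Zero = Zero ->
  nth Zero (map h es) j = h (nth Zero es j).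
Proof.
move=> h0; have [jlt|jge] := ltnP j (size es); first by rewrite (nth_map Zero).
by rewrite !nth_default ?size_map.
Qed.

Lemma map_nth_id (h : expr -> expr) es :
  (forall j, j < size es -> h (nth Zero es j) = nth Zero es j) -> map h es = es.
Proof.
move=> h_id; apply: (@eq_from_nth _ Zero); rewrite ?size_map // => j j_es.
by rewrite (nth_map Zero) // h_id.
Qed.

Lemma eq_map_nth (h1 h2 : expr -> expr) es :
  (forall j, j < size es -> h1 (nth Zero es j) = h2 (nth Zero es j)) -> map h1 es = map h2 es.
Proof.
move=> eq_h; apply: (@eq_from_nth _ Zero); rewrite ?size_map // => j j_es.
by rewrite !(nth_map Zero) // eq_h.
Qed.

Definition vars (l : seq nat) := map Var l.

Lemma nth_vars_iota s n k : k < n -> nth Zero (vars (iota s n)) k = Var (s + k).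
Proof. by move=> kn; rewrite /vars (nth_map 0) ?size_iota // nth_iota. Qed.

Fixpoint idom t :=
  match t with
  | TGen g => gdom g
  | TId n => n
  | TSym a b => a + b
  | TComp f _ => idom f
  | TTens f g => idom f + idom g
  end.

Definition gen_eval g :=
  match g with
  | Gdiscard => [::]
  | Gcopy => [:: Var 0; Var 0]
  | Gzero => [:: Zero]
  | Gadd => [:: Add (Var 0) (Var 1)]
  | Gone => [:: One]
  | Gand => [:: Mul (Var 0) (Var 1)]
  end.

Fixpoint eval t :=
  match t with
  | TGen g => gen_eval g
  | TId n => vars (iota 0 n)
  | TSym a b => vars (iota a b ++ iota 0 a)
  | TComp f g => map (subst (eval f)) (eval g)
  | TTens f g => eval f ++ map (shift (idom f)) (eval g)
  end.

Lemma eval_comp f g : eval (TComp f g) = map (subst (eval f)) (eval g). Proof. by []. Qed.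
Lemma eval_tens f g : eval (TTens f g) = eval f ++ map (shift (idom f)) (eval g). Proof. by []. Qed.

Lemma ty_eval t a b : ty t = Some (a, b) -> idom t = a /\ size (eval t) = b.
Proof.
elim: t a b => [g|n|x y|f IHf g IHg|f IHf g IHg] a b /=.
- by case: g => -[<- <-].
- by case=> <- <-; rewrite size_map size_iota.
- by case=> <- <-; rewrite size_map size_cat !size_iota addnC.
- case tf: (ty f) => [[a1 b1]|] //; case tg: (ty g) => [[b2 c2]|] //.
  case: eqP => // _ [<- <-]; have [-> _] := IHf _ _ tf; have [_ <-] := IHg _ _ tg.
  by rewrite size_map.
- case tf: (ty f) => [[a1 b1]|] //; case tg: (ty g) => [[a2 b2]|] // [<- <-].
  have [-> <-] := IHf _ _ tf; have [-> <-] := IHg _ _ tg.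
  by rewrite size_cat size_map.
Qed.

Lemma eval_discard_n n : eval (discard_n n) = [::].
Proof. by elim: n => //= n ->. Qed.

Lemma idom_discard_n n : idom (discard_n n) = n.
Proof. by elim: n => //= n ->. Qed.

Lemma idom_copy_n n : idom (copy_n n) = n.
Proof. by elim: n => //= n ->. Qed.

Lemma occurs_eval t j i : occurs i (nth Zero (eval t) j) -> i < idom t.
Proof.
elim: t j i => [g|n|x y|f IHf g IHg|f IHf g IHg] j i /=.
- by case: g; case: j => [|[|j]] /=; rewrite ?nth_nil // => occ_i; lia.
- have [jn|jn] := ltnP j n; last by rewrite nth_default // size_map size_iota.
  by rewrite nth_vars_iota //= => /eqP ->.
- have [jxy|jxy] := ltnP j (x + y); last first.
    by rewrite nth_default // size_map size_cat !size_iota addnC.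
  rewrite /vars (nth_map 0) ?size_cat ?size_iota 1?addnC // => /= /eqP ->.
  by rewrite nth_cat size_iota; case: ifP => jy; rewrite nth_iota //; lia.
- rewrite nth_map_Zero // => /occurs_esubst [k occ_k].
  have [ks|ks] := ltnP k (size (eval f)); first by move/IHf.
  by rewrite nth_default.
- rewrite nth_cat; case: ifP => _; first by move/IHf; lia.
  by rewrite nth_map_Zero // => /occurs_shift [i' -> /IHg]; lia.
Qed.

Definition wiring n (f : nat -> nat) := vars (map f (iota 0 n)).

Lemma wiring_ext n m f g : n = m -> {in gtn n, f =1 g} -> wiring n f = wiring m g.
Proof.
by move=> <- eq_fg; congr vars; apply/eq_in_map => i; rewrite mem_iota => /andP [_ /eq_fg].
Qed.

Lemma nth_wiring n f i : i < n -> nth Zero (wiring n f) i = Var (f i).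
Proof.
by move=> i_n; rewrite /wiring /vars !(nth_map 0) ?size_map ?size_iota ?nth_iota.
Qed.

Lemma vars_iota s k : vars (iota s k) = wiring k (addn s).
Proof. by rewrite /wiring -iotaDl addn0. Qed.

Lemma wiring_cat n m f g :
  wiring n f ++ wiring m g = wiring (n + m) (fun i => if i < n then f i else g (i - n)).
Proof.
rewrite /wiring /vars iotaD !map_cat -!map_comp; congr (_ ++ _).
- by apply/eq_in_map => i; rewrite mem_iota => /andP [_ /= ->].
- rewrite (_ : iota (0 + n) m = map (addn n) (iota 0 m)) -?map_comp; last by rewrite -iotaDl addn0.
  apply/eq_in_map => i _ /=.
  by rewrite ltnNge leq_addr addKn.
Qed.

Lemma map_shift_wiring k n f : map (shift k) (wiring n f) = wiring n (fun i => k + f i).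
Proof. by rewrite /wiring /vars -!map_comp. Qed.

Lemma map_subst_wiring n p m q : {in gtn m, forall i, q i < n} ->
  map (subst (wiring n p)) (wiring m q) = wiring m (p \o q).
Proof.
move=> q_n; rewrite [wiring m _]/wiring [wiring m (_ \o _)]/wiring /vars -!map_comp.
by apply/eq_in_map => i; rewrite mem_iota => /andP [_ i_m]; rewrite /= /subst /= nth_wiring ?q_n.
Qed.

Lemma map_subst_iota es s k : s + k <= size es ->
  map (subst es) (vars (iota s k)) = take k (drop s es).
Proof.
by move=> es_sk; rewrite /vars -map_comp (@eq_map _ _ _ (nth Zero es)) // map_nth_iota //; lia.
Qed.

Lemma eval_id n : eval (TId n) = wiring n id.
Proof. by rewrite /= vars_iota. Qed.

Lemma eval_sym a b : eval (TSym a b) = wiring (b + a) (fun i => if i < b then a + i else i - b).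
Proof. by rewrite /= /vars map_cat -!/(vars _) !vars_iota wiring_cat. Qed.

Ltac index_arith :=
  move=> i; rewrite /in_mem /= => i_lt;
  repeat match goal with |- context [if ?c then _ else _] =>
    lazymatch c with
    | context [if _ then _ else _] => fail
    | _ => let E := fresh in case E: c
    end end;
  lia.

Lemma eval_copy_n n : eval (copy_n n) = wiring (n + n) (fun i => if i < n then i else i - n).
Proof.
elim: n => // n IH; rewrite [copy_n _]/= eval_comp !eval_tens IH eval_sym !eval_id.
rewrite !map_shift_wiring -[eval copy]/(wiring 2 (fun=> 0)) !wiring_cat map_subst_wiring.
  by apply: wiring_ext; [lia | index_arith].
by index_arith.
Qed.

Lemma eval_fork n X Y p q : ty X = Some (n, p) -> ty Y = Some (n, q) ->
  eval (fork n X Y) = eval X ++ eval Y.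
Proof.
move=> tX tY; have [idX _] := ty_eval tX; have [idY _] := ty_eval tY.
rewrite eval_comp eval_tens eval_copy_n map_cat -map_comp idX.
congr (_ ++ _); apply: map_nth_id => j _ /=.
- rewrite /subst -[RHS]esubst_Var; apply: esubst_ext => i /occurs_eval.
  by rewrite idX => i_n; rewrite nth_wiring ?i_n //; lia.
- rewrite /shift /subst esubst_comp -[RHS]esubst_Var; apply: esubst_ext => i /occurs_eval.
  by rewrite idY => i_n /=; rewrite nth_wiring ?ifF; [congr Var | | ]; lia.
Qed.

(* Variables outside the arity [n] are read as [Zero]. *)
Fixpoint circ n e :=
  match e with
  | Var i => if i < n then proj n i else TComp (discard_n n) zero
  | Zero => TComp (discard_n n) zero
  | One => TComp (discard_n n) Defs.one
  | Add x y => TComp (fork n (circ n x) (circ n y)) add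
  | Mul x y => TComp (fork n (circ n x) (circ n y)) and_
  end.

Lemma ty_circ n e : ty (circ n e) = Some (n, 1).
Proof.
elim: e => [i|||x IHx y IHy|x IHx y IHy] /=; rewrite ?ty_discard_n //.
- by case: ifP => i_n; [exact: ty_proj | rewrite /= ty_discard_n].
- by rewrite ty_copy_n IHx IHy eqxx.
- by rewrite ty_copy_n IHx IHy eqxx.
Qed.
#[global] Hint Rewrite ty_circ : ty.

Lemma comp_circ f n m : ty f = Some (n, m) ->
  (forall k, k < m -> TComp f (proj m k) =A circ n (nth Zero (eval f) k)) ->
  forall e, TComp f (circ m e) =A circ n (subst (eval f) e).
Proof.
move=> tf f_proj; have [_ size_f] := ty_eval tf.
have comp_const z : ty z = Some (0, 1) -> TComp f (TComp (discard_n m) z) =A TComp (discard_n n) z.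
  move=> tz; rewrite -compA; typed. rewrite (@discard_nat (TComp f (discard_n m)) n); typed.
  reflexivity.
elim=> [k|||x IHx y IHy|x IHx y IHy] /=; try exact: comp_const.
- case: ifP => k_m; first exact: f_proj.
  by rewrite /subst /= nth_default ?size_f 1?leqNgt ?k_m //; apply: comp_const.
- rewrite -compA; typed. rewrite comp_fork; typed. rewrite IHx IHy; reflexivity.
- rewrite -compA; typed. rewrite comp_fork; typed. rewrite IHx IHy; reflexivity.
Qed.

Lemma circ_tens_discardr a1 a2 e : (forall i, occurs i e -> i < a1) ->
  TTens (circ a1 e) (discard_n a2) =A circ (a1 + a2) e.
Proof.
move=> e_a1; set h := TTens (TId a1) (discard_n a2).
have th : ty h = Some (a1 + a2, a1) by rewrite /= ty_discard_n addn0.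
have eval_h : eval h = vars (iota 0 a1) by rewrite /= eval_discard_n cats0.
rewrite -[circ a1 e](comp_idl (ty_circ a1 e)) -(comp_idr (ty_discard_n a2)) -interchange; typed.
rewrite tens_unitr; typed. rewrite -/h (comp_circ th); last first.
  move=> k k_a1; rewrite eval_h nth_vars_iota //= ifT; last lia.
  rewrite -(tens_unitr (ty_proj k_a1)) interchange; typed.
  rewrite comp_idl; typed. rewrite comp_idr; typed. rewrite -proj_tensl //; reflexivity.
rewrite eval_h /subst (@esubst_ext _ Var) ?esubst_Var; first reflexivity.
by move=> i /e_a1 i_a1; rewrite nth_vars_iota.
Qed.

Lemma circ_tens_discardl a1 a2 e : (forall i, occurs i e -> i < a2) ->
  TTens (discard_n a1) (circ a2 e) =A circ (a1 + a2) (shift a1 e).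
Proof.
move=> e_a2; set h := TTens (discard_n a1) (TId a2).
have th : ty h = Some (a1 + a2, a2) by rewrite /= ty_discard_n.
have nth_h k : k < a2 -> nth Zero (eval h) k = Var (a1 + k).
  move=> k_a2; rewrite /= eval_discard_n idom_discard_n /=.
  by rewrite (nth_map Zero) ?size_map ?size_iota // nth_vars_iota.
rewrite -[circ a2 e](comp_idl (ty_circ a2 e)) -(comp_idr (ty_discard_n a1)) -interchange; typed.
rewrite tens_unitl; typed. rewrite -/h (comp_circ th); last first.
  move=> k k_a2; rewrite nth_h //= ifT; last lia.
  rewrite -(tens_unitl (ty_proj k_a2)) interchange; typed.
  rewrite comp_idl; typed. rewrite comp_idr; typed. rewrite -proj_tensr //; reflexivity.
rewrite /subst /shift (@esubst_ext _ (fun i => Var (a1 + i))); first reflexivity.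
by move=> i /e_a2 i_a2; rewrite nth_h.
Qed.

Lemma proj_eval_gen g j : j < gcod g ->
  TComp (TGen g) (proj (gcod g) j) =A circ (gdom g) (nth Zero (gen_eval g) j).
Proof.
case: g => /=; case: j => [|[|j]] // _ /=; rewrite ?proj10.
- rewrite /proj /= !tens_id tens_unitr; typed. rewrite copy_discardr; reflexivity.
- rewrite /proj /= !tens_unitr; typed. exact: eqA_ax A_copy_unit.
- by rewrite !comp_idr; typed; rewrite comp_idl; typed; reflexivity.
- by rewrite comp_idr; typed; rewrite fork_proj2 comp_idl; typed; reflexivity.
- by rewrite !comp_idr; typed; rewrite comp_idl; typed; reflexivity.
- by rewrite comp_idr; typed; rewrite fork_proj2 comp_idl; typed; reflexivity.
Qed.

Lemma proj_eval_sym x y j : j < y + x ->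
  TComp (TSym x y) (proj (y + x) j) =A circ (x + y) (nth Zero (eval (TSym x y)) j).
Proof.
move=> j_yx; rewrite /= /vars (nth_map 0); last by rewrite size_cat !size_iota.
rewrite nth_cat size_iota.
have [j_y|y_j] := ltnP j y.
- rewrite nth_iota //= ifT; last lia.
  rewrite (@proj_tensl y x j j_y) -(sym_nat (f := discard_n x)); typed.
  rewrite sym0l comp_idr; typed. rewrite -proj_tensr //; reflexivity.
- rewrite nth_iota /=; last lia. rewrite ifT; last lia.
  rewrite -{1}(subnKC y_j) (@proj_tensr y x (j - y)); last lia.
  rewrite -(sym_nat (f := proj x (j - y))); typed.
  rewrite sym0r comp_idr; typed. rewrite -proj_tensl; last lia.
  reflexivity.
Qed.

Lemma proj_eval t a b : ty t = Some (a, b) -> forall j, j < b ->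
  TComp t (proj b j) =A circ a (nth Zero (eval t) j).
Proof.
elim: t a b => [g|n|x y|f IHf g IHg|f IHf g IHg] a b /=.
- by case=> <- <-; apply: proj_eval_gen.
- case=> <- <- j j_n; rewrite comp_idl ?ty_proj // nth_vars_iota //= ifT //; reflexivity.
- by case=> <- <-; apply: proj_eval_sym.
- case tf: (ty f) => [[a1 b1]|] //; case tg: (ty g) => [[b2 c2]|] //.
  case: eqP => // b1_b2; subst b2 => -[<- <-] j j_c2.
  rewrite compA; typed. rewrite (IHg _ _ tg j j_c2) (comp_circ tf (IHf _ _ tf)).
  by rewrite nth_map_Zero //; reflexivity.
- case tf: (ty f) => [[a1 b1]|] //; case tg: (ty g) => [[a2 b2]|] // [<- <-] j j_b.
  have [idom_f size_f] := ty_eval tf; have [idom_g _] := ty_eval tg.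
  rewrite nth_cat size_f; have [j_b1|b1_j] := ltnP j b1.
  + rewrite (@proj_tensl b1 b2 j j_b1) interchange; typed.
    rewrite (IHf _ _ tf j j_b1) (@discard_nat (TComp g (discard_n b2)) a2); typed.
    by rewrite circ_tens_discardr; [reflexivity | move=> i; rewrite -idom_f; apply: occurs_eval].
  + rewrite -{1}(subnKC b1_j) (@proj_tensr b1 b2 (j - b1)); last lia.
    rewrite interchange; typed. rewrite (IHg _ _ tg (j - b1)); last lia.
    rewrite (@discard_nat (TComp f (discard_n b1)) a1); typed.
    rewrite circ_tens_discardl; last by move=> i; rewrite -idom_g; apply: occurs_eval.
    by rewrite nth_map_Zero // idom_f; reflexivity.
Qed.

Definition clip n := esubst (fun i => if i < n then Var i else Zero).

Lemma circ_clip n e : circ n (clip n e) = circ n e.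
Proof. by rewrite /clip; elim: e => //= [i|x -> y ->|x -> y ->] //; case: ifP => //= ->. Qed.

Lemma eval_circ n e : eval (circ n e) = [:: clip n e].
Proof.
elim: e => [i|||x IHx y IHy|x IHx y IHy] //.
- rewrite /clip /=; case: ifP => // i_n.
  by rewrite /proj /= !eval_discard_n !idom_discard_n /= /shift /= addn0.
- by rewrite [circ _ _]/= eval_comp (eval_fork (ty_circ n x) (ty_circ n y)) IHx IHy.
- by rewrite [circ _ _]/= eval_comp (eval_fork (ty_circ n x) (ty_circ n y)) IHx IHy.
Qed.

Fixpoint circ_seq n es :=
  if es is e :: es' then fork n (circ n e) (circ_seq n es') else discard_n n.

Lemma ty_circ_seq n es : ty (circ_seq n es) = Some (n, size es).
Proof. by elim: es => [|e es IH] /=; rewrite ?ty_discard_n ?ty_copy_n ?ty_circ ?IH ?eqxx. Qed.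

#[global] Hint Rewrite ty_circ_seq : ty.

Lemma eval_circ_seq n es : eval (circ_seq n es) = map (clip n) es.
Proof.
elim: es => [|e es IH]; first exact: eval_discard_n.
by rewrite [circ_seq _ _]/= (eval_fork (ty_circ n e) (ty_circ_seq n es)) eval_circ IH.
Qed.

Lemma eqA_circ_eval t n : ty t = Some (n, 1) -> t =A circ n (nth Zero (eval t) 0).
Proof. by move=> tt; rewrite -(proj_eval tt) // proj10 comp_idr; typed; reflexivity. Qed.

(* Instantiates an axiom [L =A R] of [A] at the polynomials [xs] by precomposing
   both sides with the circuits of [xs]. *)
Lemma circ_axiom_instance n xs L R e1 e2 :
  ty L = Some (size xs, 1) -> ty R = Some (size xs, 1) -> L =A R ->
  map (subst (map (clip n) xs)) (eval L) = [:: clip n e1] ->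
  map (subst (map (clip n) xs)) (eval R) = [:: clip n e2] -> circ n e1 =A circ n e2.
Proof.
move=> tL tR LR eval_L eval_R.
have tx_L : ty (TComp (circ_seq n xs) L) = Some (n, 1) by typecheck.
have tx_R : ty (TComp (circ_seq n xs) R) = Some (n, 1) by typecheck.
rewrite -circ_clip -[circ n e2]circ_clip.
move: (eqA_circ_eval tx_L) (eqA_circ_eval tx_R).
rewrite !eval_comp eval_circ_seq eval_L eval_R /= => <- <-.
by rewrite LR; reflexivity.
Qed.

(* Only laws that [A] validates on polynomials: in particular no [x * x = x]. *)
Inductive req : expr -> expr -> Prop :=
| req_refl e : req e e
| req_sym e f : req e f -> req f e
| req_trans e f g : req e f -> req f g -> req e g
| req_Add x x' y y' : req x x' -> req y y' -> req (Add x y) (Add x' y')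
| req_Mul x x' y y' : req x x' -> req y y' -> req (Mul x y) (Mul x' y')
| req_addC x y : req (Add x y) (Add y x)
| req_addA x y z : req (Add (Add x y) z) (Add x (Add y z))
| req_add0 x : req (Add Zero x) x
| req_addxx x : req (Add x x) Zero
| req_mulC x y : req (Mul x y) (Mul y x)
| req_mulA x y z : req (Mul (Mul x y) z) (Mul x (Mul y z))
| req_mul1 x : req (Mul One x) x
| req_mulDr x y z : req (Mul x (Add y z)) (Add (Mul x y) (Mul x z)).

#[global] Instance req_equiv : Equivalence req.
Proof. split; [exact: req_refl | exact: req_sym | exact: req_trans]. Qed.
#[global] Instance Add_req : Proper (req ==> req ==> req) Add.
Proof. by move=> ? ? ? ? ? ?; apply: req_Add. Qed.
#[global] Instance Mul_req : Proper (req ==> req ==> req) Mul.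
Proof. by move=> ? ? ? ? ? ?; apply: req_Mul. Qed.

(* Characteristic 2: the opposite of [x] is [x] itself. *)
Lemma expr_ring : ring_theory Zero One Add Mul Add id req.
Proof.
split=> [x|x y|x y z|x|x y|x y z|x y z|//|x]; try by constructor.
- by symmetry; apply: req_addA.
- by symmetry; apply: req_mulA.
- by rewrite req_mulC req_mulDr (req_mulC z x) (req_mulC z y); reflexivity.
Qed.

Lemma expr_ring_ext : ring_eq_ext Add Mul id req.
Proof. by split; [exact: Add_req | exact: Mul_req | move=> ? ?]. Qed.

Add Ring expr_ring : expr_ring (setoid req_equiv expr_ring_ext).

Lemma circ_req e f : req e f -> forall n, circ n e =A circ n f.
Proof.
elim=> {e f} [e|e f _ IH|e f g _ IH1 _ IH2|x x' y y' _ IHx _ IHy|x x' y y' _ IHx _ IHy|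
  x y|x y z|x|x|x y|x y z|x|x y z] n.
- reflexivity.
- by symmetry.
- by rewrite IH1 IH2; reflexivity.
- by rewrite /= IHx IHy; reflexivity.
- by rewrite /= IHx IHy; reflexivity.
- apply: (@circ_axiom_instance n [:: x; y] add (TComp sigma add)) => //.
  by symmetry; apply/eqA_ax/A_add_comm.
- apply: (@circ_axiom_instance n [:: x; y; z] (TComp (TTens add (TId 1)) add)
    (TComp (TTens (TId 1) add) add)) => //.
  exact/eqA_ax/A_add_assoc.
- apply: (@circ_axiom_instance n [:: x] (TComp (TTens zero (TId 1)) add) (TId 1)) => //.
  exact/eqA_ax/A_add_unitl.
- apply: (@circ_axiom_instance n [:: x] (TComp copy add) (TComp discard zero)) => //.
  exact/eqA_ax/A_copy_add.
- apply: (@circ_axiom_instance n [:: x; y] and_ (TComp sigma and_)) => //.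
  by symmetry; apply/eqA_ax/A_and_comm.
- apply: (@circ_axiom_instance n [:: x; y; z] (TComp (TTens and_ (TId 1)) and_)
    (TComp (TTens (TId 1) and_) and_)) => //.
  exact/eqA_ax/A_and_assoc.
- apply: (@circ_axiom_instance n [:: x] (TComp (TTens Defs.one (TId 1)) and_) (TId 1)) => //.
  exact/eqA_ax/A_and_unitl.
- apply: (@circ_axiom_instance n [:: x; y; z] (TComp (TTens (TId 1) add) and_)
    (TComp (TTens copy (TId 2))
      (TComp (TTens (TTens (TId 1) sigma) (TId 1)) (TComp (TTens and_ and_) add)))) => //.
  exact/eqA_ax/A_distr.
Qed.

(** * Multilinear normal forms *)

Fixpoint bsem e (r : nat -> bool) : bool :=
  match e with
  | Var i => r i
  | Zero => false
  | One => true
  | Add x y => bsem x r (+) bsem y r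
  | Mul x y => bsem x r && bsem y r
  end.

Lemma bsem_esubst s e r : bsem (esubst s e) r = bsem e (fun i => bsem (s i) r).
Proof. by elim: e => //= x -> y ->. Qed.

Lemma bsem_ext e r r' : r =1 r' -> bsem e r = bsem e r'.
Proof. by move=> eq_r; elim: e => //= x -> y ->. Qed.

Definition upd (r : nat -> bool) k b := fun i => if i == k then b else r i.

Lemma upd_comm r i b k c : i != k -> upd (upd r i b) k c = upd (upd r k c) i b.
Proof.
move=> /negbTE ik; apply: functional_extensionality => j; rewrite /upd.
by case: (eqVneq j k) => [->|//]; rewrite eq_sym ik.
Qed.

(* Multilinear normal form of a Boolean function of [Var 0], ..., [Var k.-1],
   by Shannon expansion along the last variable x:
   F = x (F[x:=1] + F[x:=0]) + F[x:=0]. *)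
Fixpoint nf k (F : (nat -> bool) -> bool) : expr :=
  if k is k'.+1 then
    Add (Mul (Var k') (nf k' (fun r => F (upd r k' true) (+) F (upd r k' false))))
        (nf k' (fun r => F (upd r k' false)))
  else if F (fun=> false) then One else Zero.

Lemma eq_nf k F G : F =1 G -> nf k F = nf k G.
Proof.
elim: k F G => [|k IH] F G eq_FG /=; first by rewrite eq_FG.
by congr (Add (Mul _ _) _); apply: IH => r; rewrite !eq_FG.
Qed.

Lemma nf_false k : req (nf k (fun=> false)) Zero.
Proof. by elim: k => [|k IH] /=; [reflexivity | rewrite IH; ring]. Qed.

Lemma nf_true k : req (nf k (fun=> true)) One.
Proof. by elim: k => [|k IH] /=; [reflexivity | rewrite IH nf_false; ring]. Qed.

Lemma nf_var k i : i < k -> req (nf k (fun r => r i)) (Var i).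
Proof.
elim: k => [|k IH] // i_k /=.
have [ik|ki] := ltnP i k.
- have i_neq_k : (i == k) = false by apply/negbTE/eqP; lia.
  rewrite (@eq_nf k _ (fun=> false)); last by move=> r; rewrite /upd /= i_neq_k addbb.
  rewrite (@eq_nf k (fun r => upd r k false i) (fun r => r i));
    last by move=> r; rewrite /upd /= i_neq_k.
  by rewrite nf_false IH //; ring.
- have -> : i = k by lia.
  rewrite (@eq_nf k _ (fun=> true)); last by move=> r; rewrite /upd /= eqxx.
  rewrite (@eq_nf k (fun r => upd r k false k) (fun=> false));
    last by move=> r; rewrite /upd /= eqxx.
  by rewrite nf_false nf_true; ring.
Qed.

Lemma nf_add k F G : req (Add (nf k F) (nf k G)) (nf k (fun r => F r (+) G r)).
Proof.
elim: k F G => [|k IH] F G /=.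
  by case: (F _); case: (G _) => /=; [apply: req_addxx | ring..].
set F1 := nf k (fun r => F (upd r k true) (+) F (upd r k false)).
set F0 := nf k (fun r => F (upd r k false)).
set G1 := nf k (fun r => G (upd r k true) (+) G (upd r k false)).
set G0 := nf k (fun r => G (upd r k false)).
transitivity (Add (Mul (Var k) (Add F1 G1)) (Add F0 G0)); first ring.
rewrite /F1 /G1 /F0 /G0 !IH (@eq_nf k _ (fun r => (F (upd r k true) (+) G (upd r k true))
  (+) (F (upd r k false) (+) G (upd r k false)))); first reflexivity.
by move=> r; rewrite addbACA.
Qed.

Definition indep (F : (nat -> bool) -> bool) i := forall r b, F (upd r i b) = F r.

Lemma nf_indep_last k G : indep G k -> req (nf k.+1 G) (nf k G).
Proof.
move=> G_k /=; rewrite (@eq_nf k _ (fun=> false)) => [|r]; last by rewrite !G_k addbb.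
by rewrite (@eq_nf k (fun r => G (upd r k false)) G) => [|r]; [rewrite nf_false; ring | apply: G_k].
Qed.

Lemma indep_upd F i k b : i != k -> indep F i -> indep (fun r => F (upd r k b)) i.
Proof. by move=> ik F_i r c /=; rewrite upd_comm // F_i. Qed.

(* Independence of one factor from each variable stands in for the missing
   idempotence [x * x = x]. *)
Lemma nf_mul k F G : (forall i, i < k -> indep F i \/ indep G i) ->
  req (Mul (nf k F) (nf k G)) (nf k (fun r => F r && G r)).
Proof.
elim: k F G => [|k IH] F G FG_indep.
  by rewrite /=; case: (F _); case: (G _) => /=; ring.
wlog G_k : F G FG_indep / indep G k.
  move=> wlog_G; case: (FG_indep k (ltnSn k)) => [F_k|]; last exact: wlog_G.
  rewrite req_mulC wlog_G // => [|i /FG_indep []]; [|by right|by left].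
  by rewrite (@eq_nf _ _ (fun r => F r && G r)) => [|r]; [reflexivity | apply: andbC].
have upd_FG b i : i < k -> indep (fun r => F (upd r k b)) i \/ indep G i.
  move=> ik; case: (FG_indep i (ltnW ik)) => [F_i|]; last by right.
  by left; apply: indep_upd F_i; rewrite neq_ltn ik.
rewrite (nf_indep_last G_k) /=.
rewrite (@eq_nf k
    (fun r => F (upd r k true) && G (upd r k true) (+) F (upd r k false) && G (upd r k false))
  (fun r => (F (upd r k true) (+) F (upd r k false)) && G r)); last first.
  by move=> r; rewrite !G_k; case: (F _); case: (F _); case: (G _).
rewrite (@eq_nf k (fun r => F (upd r k false) && G (upd r k false))
                 (fun r => F (upd r k false) && G r));
  last by move=> r; rewrite G_k.
rewrite -!IH; first by ring.
- exact: upd_FG.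
- move=> i ik; case: (upd_FG true i ik) => [F1_i|]; last by right.
  case: (upd_FG false i ik) => [F0_i|]; last by right.
  by left => r c /=; rewrite F1_i F0_i.
Qed.

Lemma bsem_indep e i : ~~ occurs i e -> indep (bsem e) i.
Proof.
move=> + r b; elim: e => //= [j|x IHx y IHy|x IHx y IHy].
- by rewrite /upd eq_sym => /negbTE ->.
- by rewrite negb_or => /andP [/IHx -> /IHy ->].
- by rewrite negb_or => /andP [/IHx -> /IHy ->].
Qed.

Fixpoint separated e : Prop :=
  match e with
  | Add x y => separated x /\ separated y
  | Mul x y => [/\ separated x, separated y & forall i, occurs i x -> ~~ occurs i y]
  | _ => True
  end.

Lemma req_nf k e : separated e -> (forall i, occurs i e -> i < k) -> req e (nf k (bsem e)).
Proof.
elim: e => [i|||x IHx y IHy|x IHx y IHy] /= sep_e e_k.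
- by rewrite nf_var ?e_k ?eqxx //; reflexivity.
- by rewrite nf_false; reflexivity.
- by rewrite nf_true; reflexivity.
- case: sep_e => sep_x sep_y; rewrite -nf_add.
  by apply: req_Add; [apply: IHx | apply: IHy] => // i occ_i; apply: e_k; rewrite occ_i ?orbT.
- case: sep_e => sep_x sep_y disj; rewrite -nf_mul.
    by apply: req_Mul; [apply: IHx | apply: IHy] => // i occ_i; apply: e_k; rewrite occ_i ?orbT.
  move=> i _; case occ_x: (occurs i x).
  + by right; apply/bsem_indep/disj.
  + by left; apply: bsem_indep; rewrite occ_x.
Qed.

(** * Soundness of E for the Boolean semantics *)

Lemma eval_interchange f g h k a b c a' b' c' :
  ty f = Some (a, b) -> ty g = Some (b, c) -> ty h = Some (a', b') -> ty k = Some (b', c') ->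
  eval (TComp (TTens f h) (TTens g k)) = eval (TTens (TComp f g) (TComp h k)).
Proof.
move=> tf tg th tk; have [idf sf] := ty_eval tf; have [idg sg] := ty_eval tg.
rewrite /= map_cat; congr (_ ++ _).
- apply: eq_map_nth => j _; apply: esubst_ext => i /occurs_eval.
  by rewrite idg -sf => i_f; rewrite nth_cat i_f.
- rewrite -!map_comp; apply: eq_map => e /=; rewrite /subst /shift !esubst_comp.
  apply: esubst_ext => i _ /=; rewrite nth_cat ifF; last lia.
  by rewrite idg sf addKn nth_map_Zero // idf.
Qed.

Lemma eval_sym_nat f g a b c d : ty f = Some (a, c) -> ty g = Some (b, d) ->
  eval (TComp (TTens f g) (TSym c d)) = eval (TComp (TSym a b) (TTens g f)).
Proof.
move=> tf tg; have [idf sf] := ty_eval tf; have [idg sg] := ty_eval tg.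
rewrite /= /vars map_cat -!/(vars _) !map_cat !map_subst_iota; first last.
- by rewrite size_cat size_map sf sg; lia.
- by rewrite size_cat size_map sf sg; lia.
rewrite drop0 take_cat sf ltnn subnn take0 cats0 drop_cat sf ltnn subnn drop0.
rewrite take_oversize ?size_map ?sg // -map_comp idf; congr (_ ++ _).
- apply: eq_map_nth => j _ /=; rewrite /subst /shift; apply: esubst_ext => i /occurs_eval.
  by rewrite idg => i_b; rewrite /vars map_cat nth_cat size_map size_iota i_b nth_vars_iota.
- rewrite -[LHS]map_id; apply: eq_map_nth => j _ /=.
  rewrite /subst /shift esubst_comp -[LHS]esubst_Var; apply: esubst_ext => i /occurs_eval.
  rewrite idf => i_a /=; rewrite /vars map_cat nth_cat size_map size_iota ifF; last lia.
  by rewrite idg addKn nth_vars_iota.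
Qed.

Lemma eval_smc s t : smc s t -> idom s = idom t /\ eval s = eval t.
Proof.
case=> {s t}.
- move=> f g h a b c d _ _ _; split=> //=.
  rewrite -map_comp; apply/eq_map => e /=; rewrite /subst esubst_comp.
  by apply: esubst_ext => i _; apply: nth_map_Zero.
- move=> f a b tf; have [idf _] := ty_eval tf; split=> //=.
  apply: map_nth_id => j _; rewrite /subst -[RHS]esubst_Var; apply: esubst_ext => i.
  by move/occurs_eval; rewrite idf => i_a; apply: nth_vars_iota.
- move=> f a b tf; have [_ sf] := ty_eval tf; split=> //=.
  by rewrite -sf map_subst_iota ?drop0 ?take_size.
- move=> f g h a b c d e k _ _ _; split; first by rewrite /= addnA.
  rewrite /= map_cat catA -map_comp; congr (_ ++ _); apply/eq_map => x /=.
  by rewrite /shift esubst_comp; apply: esubst_ext => i _ /=; rewrite addnA.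
- move=> f a b _; split=> //=; rewrite -[RHS]map_id; apply/eq_map => x.
  by rewrite /shift -[RHS]esubst_Var; apply: esubst_ext.
- by move=> f a b _; split; rewrite /= ?addn0 ?cats0.
- move=> m n; split=> //; rewrite eval_tens !eval_id map_shift_wiring wiring_cat.
  by apply: wiring_ext => //; index_arith.
- by move=> f g h k a b c a' b' c' tf tg th tk; split=> //; apply: eval_interchange tf tg th tk.
- move=> a b; split; first by rewrite /= addnC.
  rewrite eval_comp !eval_sym eval_id map_subst_wiring; last by index_arith.
  by apply: wiring_ext; [lia | index_arith].
- move=> a b c; split; first by rewrite /= addnA.
  rewrite eval_comp !eval_tens !eval_sym !eval_id !map_shift_wiring !wiring_cat.
  by rewrite map_subst_wiring; [apply: wiring_ext; [lia | index_arith] | index_arith].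
- move=> a b c; split; first by rewrite /= addnA.
  rewrite eval_comp !eval_tens !eval_sym !eval_id !map_shift_wiring !wiring_cat.
  by rewrite map_subst_wiring; [apply: wiring_ext; [lia | index_arith] | index_arith].
- move=> f g a b c d tf tg; have [idf _] := ty_eval tf; have [idg _] := ty_eval tg.
  by split; [rewrite /= idf idg | apply: eval_sym_nat tf tg].
Qed.

Definition semeq s t := [/\ idom s = idom t, size (eval s) = size (eval t) &
  forall r j, bsem (nth Zero (eval s) j) r = bsem (nth Zero (eval t) j) r].

Lemma semeq_refl t : semeq t t. Proof. by []. Qed.

Lemma semeq_sym s t : semeq s t -> semeq t s.
Proof. by case=> id_st size_st sem_st; split=> // r j; rewrite sem_st. Qed.

Lemma semeq_trans s t u : semeq s t -> semeq t u -> semeq s u.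
Proof.
case=> id_st size_st sem_st [id_tu size_tu sem_tu].
by split; [rewrite id_st | rewrite size_st | move=> r j; rewrite sem_st].
Qed.

Lemma semeq_comp f f' g g' : semeq f f' -> semeq g g' -> semeq (TComp f g) (TComp f' g').
Proof.
case=> id_f size_f sem_f [id_g size_g sem_g]; split; rewrite /= ?size_map //.
by move=> r j; rewrite !nth_map_Zero // /subst !bsem_esubst sem_g; apply: bsem_ext.
Qed.

Lemma semeq_tens f f' g g' : semeq f f' -> semeq g g' -> semeq (TTens f g) (TTens f' g').
Proof.
case=> id_f size_f sem_f [id_g size_g sem_g]; split; rewrite /= ?id_f ?id_g //.
  by rewrite !size_cat !size_map size_f size_g.
move=> r j; rewrite !nth_cat size_f; case: ifP => // _.
by rewrite !nth_map_Zero // /shift !bsem_esubst sem_g.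
Qed.

Lemma semeq_smc s t : smc s t -> semeq s t.
Proof. by case/eval_smc => id_st eval_st; split; rewrite ?eval_st. Qed.

Lemma eval_copy_nat f a b : ty f = Some (a, b) ->
  eval (TComp f (copy_n b)) = eval (TComp (copy_n a) (TTens f f)).
Proof.
move=> tf; have [_ size_f] := ty_eval tf.
rewrite -/(fork a f f) (eval_fork tf tf) eval_comp eval_copy_n.
rewrite (_ : wiring _ _ = wiring b id ++ wiring b id); last first.
  by rewrite wiring_cat; apply: wiring_ext => // i; case: ifP.
by rewrite /wiring map_id map_cat map_subst_iota ?size_f // drop0 take_oversize ?size_f.
Qed.

(* The remaining axioms of [E] are closed circuits with at most three inputs:
   compare their truth tables. *)
Ltac truth_table :=
  split=> //; let r := fresh "r" in
  move=> r [|[|[|?]]] //=; by case: (r 0); case: (r 1); case: (r 2).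

Lemma semeq_axE s t : axE s t -> semeq s t.
Proof.
case=> [{}s {}t [] /=|]; try truth_table.
- move=> f a b tf; have [id_f _] := ty_eval tf.
  by split; rewrite ?(eval_copy_nat tf) //= id_f idom_copy_n.
- move=> f a b tf; have [id_f _] := ty_eval tf.
  by split; rewrite /= ?eval_discard_n ?id_f ?idom_discard_n.
Qed.

Lemma eqE_semeq c d : eq_modE c d -> semeq c d.
Proof.
elim=> {c d} [s t [/semeq_smc|/semeq_axE] //|t|s t _|s t u _ st _ tu|f f' g g' _ ff' _ gg'|
  f f' g g' _ ff' _ gg'].
- exact: semeq_refl.
- exact: semeq_sym.
- exact: semeq_trans st tu.
- exact: semeq_comp.
- exact: semeq_tens.
Qed.

(** * Wire graphs of safe circuits *)

Definition wire_map (G H : graph) w :=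
  if w \in gins H then nth 0 (gouts G) (index w (gins H)) else nw G + w.

Lemma wgraph_comp f g : let G := wgraph f in let H := wgraph g in
  let rp e := (wire_map G H e.1, wire_map G H e.2) in
  wgraph (TComp f g) = Graph (nw G + nw H) (gins G) (map (wire_map G H) (gouts H))
     (gedges G ++ map rp (gedges H)) (gands G ++ map rp (gands H)).
Proof. by []. Qed.

Lemma wgraph_tens f g : let G := wgraph f in let H := wgraph g in
  wgraph (TTens f g) = Graph (nw G + nw H)
    (gins G ++ map (addn (nw G)) (gins H)) (gouts G ++ map (addn (nw G)) (gouts H))
    (gedges G ++ map (shiftp (nw G)) (gedges H)) (gands G ++ map (shiftp (nw G)) (gands H)).
Proof. by []. Qed.

Definition wf_graph (G : graph) a b := [/\ size (gins G) = a, size (gouts G) = b,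
  all (fun w => w < nw G) (gins G), all (fun w => w < nw G) (gouts G)
  & (forall p q, (p, q) \in gands G -> p < nw G /\ q < nw G) /\ uniq (gins G)].

Lemma wf_wgraph t a b : ty t = Some (a, b) -> wf_graph (wgraph t) a b.
Proof.
elim: t a b => [g|n|x y|f IHf g IHg|f IHf g IHg] a b;
  [move=> /=.. | rewrite wgraph_comp /wf_graph /= | rewrite wgraph_tens /wf_graph /=].
- case=> <- <-; case: g; split=> //=; split=> // p q; rewrite ?inE //= => /eqP [-> ->] //.
- case=> <- <-; split; rewrite ?size_iota ?iota_uniq //; apply/allP => i; rewrite mem_iota /=; lia.
- case=> <- <-; split; rewrite ?size_cat ?size_iota ?iota_uniq 1?addnC //.
  + by apply/allP => i; rewrite mem_iota /=; lia.
  + by apply/allP => i; rewrite mem_cat !mem_iota /=; lia.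
- case tf: (ty f) => [[a1 b1]|] //; case tg: (ty g) => [[b2 c2]|] //.
  case: eqP => // b1_b2; subst b2 => -[<- <-].
  have [s1 s2 a1' a2' [g1 u1]] := IHf _ _ tf; have [s3 s4 a3 a4 [g2 u2]] := IHg _ _ tg.
  have wm_lt w : w < nw (wgraph g) ->
      wire_map (wgraph f) (wgraph g) w < nw (wgraph f) + nw (wgraph g).
    rewrite /wire_map; case: ifP => w_in w_lt; last lia.
    suff : nth 0 (gouts (wgraph f)) (index w (gins (wgraph g))) < nw (wgraph f) by lia.
    by apply: (allP a2'); apply: mem_nth; rewrite s2 -s3 index_mem.
  split => //; last split => //.
  + by rewrite size_map.
  + by apply/allP => x /(allP a1') /=; lia.
  + by apply/allP => x /mapP [w /(allP a4) w_lt ->]; apply: wm_lt.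
  + move=> p q; rewrite mem_cat => /orP [/g1|/mapP [[p0 q0] /g2 [p0_lt q0_lt] [-> ->]]]; first lia.
    by split; apply: wm_lt.
- case tf: (ty f) => [[a1 b1]|] //; case tg: (ty g) => [[a2 b2]|] // [<- <-].
  have [s1 s2 a1' a2' [g1 u1]] := IHf _ _ tf; have [s3 s4 a3 a4 [g2 u2]] := IHg _ _ tg.
  split; rewrite ?size_cat ?size_map ?s1 ?s2 ?s3 ?s4 //.
  + by apply/allP => x; rewrite mem_cat => /orP [/(allP a1')|/mapP [w /(allP a3) ? ->]] /=; lia.
  + by apply/allP => x; rewrite mem_cat => /orP [/(allP a2')|/mapP [w /(allP a4) ? ->]] /=; lia.
  + split.
      by move=> p q; rewrite mem_cat => /orP [/g1|/mapP [[p0 q0] /g2 [? ?] [-> ->]]] /=; lia.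
    rewrite cat_uniq u1 map_inj_uniq ?u2 ?andbT /=; last exact: addnI.
    by apply/hasPn => x /mapP [w _ ->]; apply/negP => /(allP a1') /=; lia.
Qed.

Fixpoint subterm (e f : expr) : Prop :=
  e = f \/ match f with
           | Add x y | Mul x y => subterm e x \/ subterm e y
           | _ => False
           end.

Lemma subterm_esubst u v s e : subterm (Mul u v) (esubst s e) ->
  (exists2 k, occurs k e & subterm (Mul u v) (s k)) \/
  (exists u0 v0, [/\ subterm (Mul u0 v0) e, u = esubst s u0 & v = esubst s v0]).
Proof.
elim: e => [k|||x IHx y IHy|x IHx y IHy] /=; try by case.
- by left; exists k; rewrite ?eqxx.
- case=> // -[/IHx|/IHy] [[k occ_k sub_k]|[u0 [v0 [sub_uv -> ->]]]].
  + by left; exists k; rewrite ?occ_k.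
  + by right; exists u0, v0; split=> //; right; left.
  + by left; exists k; rewrite ?occ_k ?orbT.
  + by right; exists u0, v0; split=> //; right; right.
- case=> [[-> ->]|[/IHx|/IHy] [[k occ_k sub_k]|[u0 [v0 [sub_uv -> ->]]]]].
  + by right; exists x, y; split=> //; left.
  + by left; exists k; rewrite ?occ_k.
  + by right; exists u0, v0; split=> //; right; left.
  + by left; exists k; rewrite ?occ_k ?orbT.
  + by right; exists u0, v0; split=> //; right; right.
Qed.

Lemma subterm_shift u v k e : subterm (Mul u v) (shift k e) ->
  exists u0 v0, [/\ subterm (Mul u0 v0) e, u = shift k u0 & v = shift k v0].
Proof. by case/subterm_esubst => [[i _ [|]]|]. Qed.

Lemma separatedP e :
  (forall u v, subterm (Mul u v) e -> forall i, occurs i u -> ~~ occurs i v) -> separated e.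
Proof.
elim: e => //= [x IHx y IHy|x IHx y IHy] sep_e.
- by split; [apply: IHx | apply: IHy] => u v sub_uv; apply: sep_e; right; [left | right].
- split; [apply: IHx | apply: IHy | apply: sep_e; left] => // u v sub_uv.
  + by apply: sep_e; right; left.
  + by apply: sep_e; right; right.
Qed.

Lemma reach_map (G H : graph) h x y :
  (forall x y, (x, y) \in gedges G -> (h x, h y) \in gedges H) ->
  reach G x y -> reach H (h x) (h y).
Proof.
move=> hE; elim=> {x y} [x y /hE|x|x y z _ IH1 _ IH2]; first exact: rt_step.
- exact: rt_refl.
- exact: rt_trans IH1 IH2.
Qed.

Record labelling t a b (W : nat -> expr) : Prop := Labelling {
  label_ins : forall i, i < a -> W (nth 0 (gins (wgraph t)) i) = Var i;
  label_outs : forall j, j < b -> W (nth 0 (gouts (wgraph t)) j) = nth Zero (eval t) j;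
  label_reach : forall w, w < nw (wgraph t) -> forall i, occurs i (W w) ->
    i < a /\ reach (wgraph t) (nth 0 (gins (wgraph t)) i) w;
  label_and : forall w, w < nw (wgraph t) -> forall u v, subterm (Mul u v) (W w) ->
    exists p q, [/\ (p, q) \in gands (wgraph t), W p = u & W q = v] }.

Lemma labelling_gen g : exists W, labelling (TGen g) (gdom g) (gcod g) W.
Proof.
case: g.
- exists (nth Zero [:: Var 0]); split=> /=; first by case.
  + by [].
  + by move=> [|w] //= _ i /eqP ->; split=> //; apply: rt_refl.
  + by move=> [|w] //= _ u v [].
- exists (nth Zero [:: Var 0; Var 0; Var 0]); split=> /=; first by case.
  + by move=> [|[|j]].
  + by move=> [|[|[|w]]] //= _ i /eqP ->; split=> //; [apply: rt_refl | apply: rt_step..].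
  + by move=> [|[|[|w]]] //= _ u v [].
- exists (nth Zero [:: Zero]); split=> //=; first by case.
  + by move=> [|w].
  + by move=> [|w] //= _ u v [].
- exists (nth Zero [:: Var 0; Var 1; Add (Var 0) (Var 1)]); split=> /=; first by move=> [|[|i]].
  + by case.
  + move=> [|[|[|w]]] //= _ i; try by move/eqP ->; split=> //; apply: rt_refl.
    by case/orP => /eqP ->; split=> //; apply: rt_step.
  + by move=> [|[|[|w]]] //= _ u v; intuition discriminate.
- exists (nth Zero [:: One]); split=> //=; first by case.
  + by move=> [|w].
  + by move=> [|w] //= _ u v [].
- exists (nth Zero [:: Var 0; Var 1; Mul (Var 0) (Var 1)]); split=> /=; first by move=> [|[|i]].
  + by case.
  + move=> [|[|[|w]]] //= _ i; try by move/eqP ->; split=> //; apply: rt_refl.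
    by case/orP => /eqP ->; split=> //; apply: rt_step.
  + move=> [|[|[|w]]] //= _ u v; try by case.
    by case=> [[-> ->]|[[]|[]]] //; exists 0, 1.
Qed.

Lemma labelling_wiring t n : nw (wgraph t) = n -> gins (wgraph t) = iota 0 n ->
  eval t = vars (gouts (wgraph t)) -> labelling t n (size (eval t)) Var.
Proof.
move=> nw_t ins_t eval_t; split; rewrite ?nw_t ?ins_t.
- by move=> i i_n; rewrite nth_iota.
- by move=> j; rewrite eval_t size_map => j_out; rewrite /vars (nth_map 0).
- by move=> w w_n i /eqP ->; rewrite nth_iota //; split=> //; apply: rt_refl.
- by move=> w _ u v [].
Qed.

Lemma nth_gins_lt G a b i : wf_graph G a b -> i < a -> nth 0 (gins G) i < nw G.
Proof. by case=> ins_a _ ins_lt _ _ i_a; apply: (allP ins_lt); apply: mem_nth; rewrite ins_a. Qed.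

Lemma nth_gouts_lt G a b j : wf_graph G a b -> j < b -> nth 0 (gouts G) j < nw G.
Proof.
by case=> _ outs_b _ outs_lt _ j_b; apply: (allP outs_lt); apply: mem_nth; rewrite outs_b.
Qed.

Section LabellingComp.

Variables (f g : term) (a b c : nat) (WG WH : nat -> expr).
Hypotheses (tf : ty f = Some (a, b)) (tg : ty g = Some (b, c)).
Hypotheses (lab_f : labelling f a b WG) (lab_g : labelling g b c WH).

Let G := wgraph f.
Let H := wgraph g.
Let rm := wire_map G H.

(* The own wires of the inputs of [g] are dead in [TComp f g]: [wire_map]
   identifies them with the outputs of [f]. *)
Definition comp_label w :=
  if w < nw G then WG w
  else if w - nw G \in gins H then Zero else subst (eval f) (WH (w - nw G)).

Lemma wire_map_ins k : k < b -> rm (nth 0 (gins H) k) = nth 0 (gouts G) k.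
Proof.
have [ins_b _ _ _ [_ uniq_ins]] := wf_wgraph tg.
by move=> k_b; rewrite /rm /wire_map mem_nth ?ins_b // index_uniq ?ins_b.
Qed.

Lemma comp_label_wire_map w : w < nw H -> comp_label (rm w) = subst (eval f) (WH w).
Proof.
have wf_g := wf_wgraph tg; have [ins_b _ _ _ _] := wf_g.
move=> w_H; rewrite /rm /wire_map /comp_label; case w_in: (w \in gins H).
- have k_b : index w (gins H) < b by rewrite -ins_b index_mem.
  rewrite ifT; last exact: nth_gouts_lt (wf_wgraph tf) k_b.
  by rewrite (label_outs lab_f) // -[in RHS](nth_index 0 w_in) (label_ins lab_g).
- by rewrite ifF ?addKn ?w_in //; lia.
Qed.

Lemma reach_compl x y : reach G x y -> reach (wgraph (TComp f g)) x y.
Proof. by apply: (@reach_map _ _ id) => p q pq; rewrite wgraph_comp mem_cat pq. Qed.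

Lemma reach_compr x y : reach H x y -> reach (wgraph (TComp f g)) (rm x) (rm y).
Proof.
apply: reach_map => p q pq; rewrite wgraph_comp mem_cat; apply/orP; right.
by apply/mapP; exists (p, q).
Qed.

Lemma labelling_comp : labelling (TComp f g) a c comp_label.
Proof.
have wf_f := wf_wgraph tf; have [_ _ _ _ [ands_f _]] := wf_f.
have [_ outs_c _ outs_lt [ands_g _]] := wf_wgraph tg.
have [_ size_f] := ty_eval tf.
split; rewrite wgraph_comp -/G -/H -/rm /=.
- move=> i i_a; rewrite /comp_label ifT; [exact: (label_ins lab_f) | exact: nth_gins_lt wf_f i_a].
- move=> j j_c; rewrite (nth_map 0) ?outs_c //.
  rewrite comp_label_wire_map ?(nth_gouts_lt (wf_wgraph tg)) //.
  by rewrite (label_outs lab_g) // nth_map_Zero.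
- move=> w w_lt i; rewrite /comp_label; case: ifP => w_G.
    by case/(label_reach lab_f w_G) => i_a reach_i; split=> //; apply: reach_compl.
  case: ifP => // w_ins /occurs_esubst [k occ_k].
  have w_H : w - nw G < nw H by lia.
  have [k_b reach_k] := label_reach lab_g w_H occ_k.
  rewrite -(label_outs lab_f) // => /(label_reach lab_f (nth_gouts_lt wf_f k_b)) [i_a reach_i].
  split=> //; apply: rt_trans (reach_compl reach_i) _.
  have := reach_compr reach_k; rewrite wire_map_ins // /rm /wire_map w_ins.
  by rewrite subnKC //; lia.
- move=> w w_lt u v; rewrite {1}/comp_label; case: ifP => w_G.
    move=> /(label_and lab_f w_G) [p [q [pq <- <-]]]; exists p, q.
    by have [p_G q_G] := ands_f _ _ pq; rewrite mem_cat pq /comp_label p_G q_G.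
  case: ifP => w_ins; first by case.
  have w_H : w - nw G < nw H by lia.
  case/subterm_esubst => [[k occ_k]|[u0 [v0 [sub_uv -> ->]]]].
  + have [k_b _] := label_reach lab_g w_H occ_k.
    rewrite -(label_outs lab_f) // => /(label_and lab_f (nth_gouts_lt wf_f k_b)) [p [q [pq <- <-]]].
    by have [p_G q_G] := ands_f _ _ pq; exists p, q; rewrite mem_cat pq /comp_label p_G q_G.
  + have [p [q [pq <- <-]]] := label_and lab_g w_H sub_uv.
    have [p_H q_H] := ands_g _ _ pq; exists (rm p), (rm q).
    rewrite !comp_label_wire_map // mem_cat; split=> //; apply/orP; right.
    by apply/mapP; exists (p, q).
Qed.

End LabellingComp.

Section LabellingTens.

Variables (f g : term) (a1 b1 a2 b2 : nat) (WG WH : nat -> expr).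
Hypotheses (tf : ty f = Some (a1, b1)) (tg : ty g = Some (a2, b2)).
Hypotheses (lab_f : labelling f a1 b1 WG) (lab_g : labelling g a2 b2 WH).

Let G := wgraph f.
Let H := wgraph g.

Definition tens_label w := if w < nw G then WG w else shift a1 (WH (w - nw G)).

Lemma tens_label_shift w : tens_label (nw G + w) = shift a1 (WH w).
Proof. by rewrite /tens_label ifF ?addKn //; lia. Qed.

Lemma reach_tensl x y : reach G x y -> reach (wgraph (TTens f g)) x y.
Proof. by apply: (@reach_map _ _ id) => p q pq; rewrite wgraph_tens mem_cat pq. Qed.

Lemma reach_tensr x y : reach H x y -> reach (wgraph (TTens f g)) (nw G + x) (nw G + y).
Proof.
apply: reach_map => p q pq; rewrite wgraph_tens mem_cat; apply/orP; right.
by apply/mapP; exists (p, q).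
Qed.

Lemma labelling_tens : labelling (TTens f g) (a1 + a2) (b1 + b2) tens_label.
Proof.
have wf_f := wf_wgraph tf; have [ins_f outs_f _ _ [ands_f _]] := wf_f.
have wf_g := wf_wgraph tg; have [ins_g outs_g _ _ _] := wf_g.
have [idom_f size_f] := ty_eval tf.
split; rewrite wgraph_tens -/G -/H /=.
- move=> i i_a; rewrite nth_cat ins_f; case: ifP => i_a1.
    by rewrite /tens_label ifT ?(label_ins lab_f) // (nth_gins_lt wf_f).
  rewrite (nth_map 0) ?ins_g; last lia.
  by rewrite tens_label_shift (label_ins lab_g) /shift /=; [congr Var | ]; lia.
- move=> j j_b; rewrite nth_cat outs_f nth_cat size_f; case: ifP => j_b1.
    by rewrite /tens_label ifT ?(label_outs lab_f) // (nth_gouts_lt wf_f).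
  rewrite (nth_map 0) ?outs_g; last lia.
  by rewrite tens_label_shift (label_outs lab_g) ?nth_map_Zero ?idom_f //; lia.
- move=> w w_lt i; rewrite /tens_label; case: ifP => w_G.
    case/(label_reach lab_f w_G) => i_a1 reach_i; split; first lia.
    by rewrite nth_cat ins_f i_a1; apply: reach_tensl.
  case/occurs_shift => i' -> occ_i'; have w_H : w - nw G < nw H by lia.
  have [i'_a2 reach_i'] := label_reach lab_g w_H occ_i'; split; first lia.
  rewrite nth_cat ins_f ifF; last lia.
  rewrite (nth_map 0) ?ins_g ?addKn //; move: (reach_tensr reach_i').
  by rewrite subnKC //; lia.
- move=> w w_lt u v; rewrite {1}/tens_label; case: ifP => w_G.
    move=> /(label_and lab_f w_G) [p [q [pq <- <-]]]; exists p, q.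
    by have [p_G q_G] := ands_f _ _ pq; rewrite mem_cat pq /tens_label p_G q_G.
  case/subterm_shift => u0 [v0 [sub_uv -> ->]]; have w_H : w - nw G < nw H by lia.
  have [p [q [pq <- <-]]] := label_and lab_g w_H sub_uv.
  exists (nw G + p), (nw G + q); rewrite !tens_label_shift mem_cat; split=> //.
  by apply/orP; right; apply/mapP; exists (p, q).
Qed.

End LabellingTens.

Lemma labelling_exists t a b : ty t = Some (a, b) -> exists W, labelling t a b W.
Proof.
elim: t a b => [g|n|x y|f IHf g IHg|f IHf g IHg] a b /=.
- by case=> <- <-; apply: labelling_gen.
- case=> <- <-; rewrite -[in X in labelling _ _ X](size_iota 0 n) -(size_map Var).
  by exists Var; apply: labelling_wiring.
- case=> <- <-; rewrite (_ : y + x = size (eval (TSym x y))); last first.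
    by rewrite /= size_map size_cat !size_iota.
  by exists Var; apply: labelling_wiring.
- case tf: (ty f) => [[a1 b1]|] //; case tg: (ty g) => [[b2 c2]|] //.
  case: eqP => // b1_b2; subst b2 => -[<- <-].
  have [WG lab_f] := IHf _ _ tf; have [WH lab_g] := IHg _ _ tg.
  by exists (comp_label f g WG WH); apply: labelling_comp tf tg lab_f lab_g.
- case tf: (ty f) => [[a1 b1]|] //; case tg: (ty g) => [[a2 b2]|] // [<- <-].
  have [WG lab_f] := IHf _ _ tf; have [WH lab_g] := IHg _ _ tg.
  by exists (tens_label f a1 WG WH); apply: labelling_tens tf tg lab_f lab_g.
Qed.

Lemma safe_separated t a b j : ty t = Some (a, b) -> safe t -> separated (nth Zero (eval t) j).
Proof.
move=> tt safe_t; have [W lab_t] := labelling_exists tt.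
have wf_t := wf_wgraph tt; have [ins_a _ _ _ [ands_t _]] := wf_t.
have [jb|bj] := ltnP j b; last by rewrite nth_default //; have [_ ->] := ty_eval tt.
rewrite -(label_outs lab_t) //; apply: separatedP => u v sub_uv i occ_u; apply/negP => occ_v.
have [p [q [pq Wp Wq]]] := label_and lab_t (nth_gouts_lt wf_t jb) sub_uv.
have [p_lt q_lt] := ands_t _ _ pq; rewrite -Wp in occ_u; rewrite -Wq in occ_v.
have [i_a reach_p] := label_reach lab_t p_lt occ_u.
have [_ reach_q] := label_reach lab_t q_lt occ_v.
by apply: (safe_t p q _ pq _ (conj reach_p reach_q)); apply: mem_nth; rewrite ins_a.
Qed.

Theorem mainTheorem5 (a b : nat) (c d : term) :
  ty c = Some (a, b) -> ty d = Some (a, b) ->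
  safe c -> safe d -> eq_modE c d -> eq_modA c d.
Proof.
move=> tc td safe_c safe_d /eqE_semeq [_ _ sem_cd].
apply: (eqA_proj tc td) => j j_b; rewrite (proj_eval tc j_b) (proj_eval td j_b).
apply: circ_req; have [idom_c _] := ty_eval tc; have [idom_d _] := ty_eval td.
rewrite (req_nf (k := a) (safe_separated j tc safe_c));
  last by move=> i /occurs_eval; rewrite idom_c.
rewrite (req_nf (k := a) (safe_separated j td safe_d));
  last by move=> i /occurs_eval; rewrite idom_d.
by rewrite (eq_nf _ (sem_cd^~ j)); reflexivity.
Qed.
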